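(* Let $k\ge 2$ be an even integer and $\ell\ge 2$ an integer. Then the rational number $$\frac{(k+1)(\ell-1)B_k}{\ell^{k+1}-1}$$ has $2$-adic valuation exactly $-1$. Consequently, for every integer $n\ge 2$ dividing $k$, there is no polynomial $f\in\mathbb{Q}[x]$ with $$\frac{B_{k+1}(\ell x+1)-B_{k+1}(x+1)}{x}=(\ell^{k+1}-1)f(x)^n.$$
   Context: $B_i$ denote the Bernoulli numbers ($B_0=1$, $B_1=-1/2$, $B_2=1/6,\dots$) and $B_q(x)=\sum_{i=0}^{q}\binom{q}{i}B_i x^{q-i}$ the Bernoulli polynomials. The $2$-adic valuation of a nonzero rational $a/b$ is $v_2(a)-v_2(b)$. *)

From HB Require Import structures.
From mathcomp Require Import all_boot all_order all_algebra.
Set Implicit Arguments. Unset Strict Implicit. Unset Printing Implicit Defensive.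
Import Order.TTheory GRing.Theory Num.Theory.
Local Open Scope ring_scope.

(* bern_seq n = [:: B_0; ...; B_n], via the standard recurrence
   sum_{i=0}^{n} C(n+1,i) B_i = 0 (n >= 1), B_0 = 1, so that B_1 = -1/2. *)
Fixpoint bern_seq (n : nat) : seq rat :=
  match n with
  | 0 => [:: 1]
  | n'.+1 =>
      let s := bern_seq n' in
      rcons s (- (\sum_(i < n'.+1) ('C(n'.+2, i))%:R * s`_i) / (n'.+2)%:R)
  end.

Definition bernoulli (n : nat) : rat := (bern_seq n)`_n.

Definition bernoulli_poly (q : nat) : {poly rat} :=
  \sum_(i < q.+1) (('C(q, i))%:R * bernoulli i) *: 'X^(q - i).

Definition v2 (r : rat) : int :=
  (logn 2 `|numq r|%N)%:Z - (logn 2 (`|denq r|%N))%:Z.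

From HB Require Import structures.
From mathcomp Require Import all_boot all_order all_algebra.
From mathcomp Require Import ring lra zify.
Set Implicit Arguments. Unset Strict Implicit. Unset Printing Implicit Defensive.
Import Order.TTheory GRing.Theory Num.Theory.
Local Open Scope ring_scope.

(* Since B_q(1) = B_q for q >= 2, differentiating the polynomial identity at 0
   gives (k+1)(l-1) B_k = (l^(k+1) - 1) f(0)^n, so f(0)^n would equal r; it
   therefore suffices that v2(r) = -1, which no n-th power with n >= 2 has.
   Now l^(k+1) - 1 = (l-1)(1 + l + ... + l^k) with an odd second factor, so
   r = (k+1) B_k / odd, and v2(B_k) = -1 because 2 B_k = 1 mod 2 for even k
   (the 2-part of von Staudt-Clausen).  The latter follows by strong induction
   from the Bernoulli recurrence, using that the odd Bernoulli numbers beyond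
   B_1 vanish and that the binomial coefficients C(k+1, i) with i even sum to
   2^k. *)

Lemma size_bern_seq n : size (bern_seq n) = n.+1.
Proof. by elim: n => //= n IH; rewrite size_rcons IH. Qed.

Lemma nth_bern_seq n i : (i <= n)%N -> (bern_seq n)`_i = bernoulli i.
Proof.
rewrite /bernoulli; elim: n => [|n IH] lein; first by have -> : i = 0%N by lia.
case: (ltnP i n.+1) => [ltin|?]; last by have -> : i = n.+1 by lia.
by rewrite /= nth_rcons size_bern_seq ltin IH.
Qed.

Lemma bernoulli0 : bernoulli 0 = 1. Proof. by []. Qed.

Lemma bernoulliS n : bernoulli n.+1 =
  - (\sum_(i < n.+1) ('C(n.+2, i))%:R * bernoulli i) / (n.+2)%:R.
Proof.
rewrite {1}/bernoulli /= nth_rcons size_bern_seq ltnn eqxx.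
by congr (- _ / _); apply: eq_bigr => i _; rewrite nth_bern_seq // -ltnS.
Qed.

Lemma bernoulli1 : bernoulli 1 = - 1 / 2.
Proof. by rewrite bernoulliS big_ord1 bernoulli0 bin0 mulr1. Qed.

Lemma sum_binomial_bernoulli m : (2 <= m)%N ->
  \sum_(i < m) ('C(m, i))%:R * bernoulli i = 0.
Proof.
case: m => [|[|n]] // _; rewrite big_ord_recr /= bernoulliS binSn.
have n2_neq0 : (n.+2)%:R != 0 :> rat by rewrite pnatr_eq0.
by rewrite mulrCA mulfV // mulr1 subrr.
Qed.

Lemma bernoulli_poly0 : bernoulli_poly 0 = 1.
Proof. by rewrite /bernoulli_poly big_ord1 bin0 bernoulli0 mul1r scale1r expr0. Qed.

Lemma deriv_bernoulli_poly n :
  (bernoulli_poly n.+1)^`() = (n.+1)%:R *: bernoulli_poly n.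
Proof.
rewrite /bernoulli_poly raddf_sum big_ord_recr /= subnn derivZ derivXn scaler0 addr0.
rewrite scaler_sumr; apply: eq_bigr => i _; have lein : (i <= n)%N := ltn_ord i.
rewrite derivZ derivXn -scaler_nat !scalerA subSn //=; congr (_ *: _).
have := mul_bin_down n.+1 i; rewrite /= => bin_down.
by rewrite mulrA -natrM bin_down -subSn // mulrAC -natrM mulnC.
Qed.

Lemma horner0_bernoulli_poly n : (bernoulli_poly n).[0] = bernoulli n.
Proof.
rewrite /bernoulli_poly horner_sum big_ord_recr /= subnn hornerZ hornerXn.
rewrite expr0 mulr1 binn mul1r big1 ?add0r // => i _.
by rewrite hornerZ hornerXn expr0n subn_eq0 leqNgt ltn_ord mulr0.
Qed.

Lemma horner1_bernoulli_poly n : (2 <= n)%N -> (bernoulli_poly n).[1] = bernoulli n.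
Proof.
move=> le2n; rewrite /bernoulli_poly horner_sum.
under eq_bigr => i _ do rewrite hornerZ hornerXn expr1n mulr1.
by rewrite big_ord_recr /= sum_binomial_bernoulli // add0r binn mul1r.
Qed.

Lemma deriv_eq0_polyC (R : numDomainType) (p : {poly R}) :
  p^`() = 0 -> p = (p.[0])%:P.
Proof.
move=> p'0; apply/polyP => -[|i]; first by rewrite coefC horner_coef0.
have /eqP := congr1 (fun q : {poly R} => q`_i) p'0.
by rewrite coefC coef_deriv coef0 mulrn_eq0 => /eqP.
Qed.

Lemma deriv_eq_polyC_horner (R : numDomainType) (p : {poly R}) (c : R) :
  p^`() = c%:P -> p.[1] - p.[0] = c.
Proof.
move=> p'c; have : (p - c *: 'X)^`() = 0.
  by rewrite derivB derivZ derivX p'c alg_polyC subrr.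
move=> /deriv_eq0_polyC /(congr1 (horner^~ 1)).
by rewrite !hornerE subr0 => <-; rewrite opprB addrC subrK.
Qed.

Lemma bernoulli_poly_reflect n :
  bernoulli_poly n \Po (1 - 'X) = (-1) ^+ n *: bernoulli_poly n.
Proof.
(* D (n+1) is constant since its derivative is a multiple of D n = 0, and this
   constant vanishes because D (n+2), an antiderivative of it, takes the same
   value at 0 and 1. *)
pose D m := bernoulli_poly m \Po (1 - 'X) - (-1) ^+ m *: bernoulli_poly m.
have D'S m : (D m.+1)^`() = - (m.+1%:R *: D m).
  rewrite /D derivB deriv_comp derivZ !deriv_bernoulli_poly comp_polyZ.
  rewrite derivB derivX -polyC1 derivC sub0r mulrN1 exprS /D scalerBr !scalerA.
  rewrite opprD opprK; congr (_ + _).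
  by rewrite mulN1r mulNr scaleNr opprK mulrC.
have D01 m : (2 <= m)%N -> (D m).[1] = (D m).[0].
  by move=> le2m; rewrite /D !hornerE !horner_comp !hornerE subrr
    horner0_bernoulli_poly horner1_bernoulli_poly.
apply/eqP; rewrite -subr_eq0; apply/eqP; rewrite -/(D n).
elim: n => [|n IHn]; first by rewrite /D bernoulli_poly0 scale1r -polyC1 comp_polyC subrr.
have DSC : D n.+1 = ((D n.+1).[0])%:P.
  by apply: deriv_eq0_polyC; rewrite D'S IHn scaler0 oppr0.
set c := (D n.+1).[0].
have D'C : (D n.+2)^`() = (- (n.+2%:R * c))%:P.
  by rewrite D'S DSC -mul_polyC -polyCM polyCN.
move: (deriv_eq_polyC_horner D'C); rewrite D01 // subrr => /eqP.
rewrite eq_sym oppr_eq0 mulf_eq0 pnatr_eq0 /= => /eqP DS0.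
by rewrite DSC -/c DS0.
Qed.

Lemma bernoulli_odd m : (3 <= m)%N -> odd m -> bernoulli m = 0.
Proof.
move=> le3m odd_m; have := congr1 (horner^~ 0) (bernoulli_poly_reflect m).
rewrite horner_comp !hornerE horner0_bernoulli_poly horner1_bernoulli_poly 1?ltnW //.
rewrite -signr_odd odd_m expr1 mulN1r => /eqP.
by rewrite -addr_eq0 -mulr2n mulrn_eq0 /= => /eqP.
Qed.

(* [Z2] is the local ring Z_(2) of rationals with odd denominator and [twoZ2]
   its maximal ideal. *)
Definition Z2 (r : rat) := exists (a : int) (b : nat), odd b /\ r = a%:~R / b%:R.

Definition twoZ2 (r : rat) := Z2 (r / 2).

Lemma odd_natr_neq0 b : odd b -> b%:R != 0 :> rat.
Proof. by rewrite pnatr_eq0; case: b. Qed.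

Lemma Z2_int (z : int) : Z2 z%:~R.
Proof. by exists z, 1%N; rewrite divr1. Qed.

Lemma Z2_nat n : Z2 n%:R.
Proof. exact: (Z2_int n). Qed.

Lemma Z2_invn m : odd m -> Z2 (m%:R)^-1.
Proof. by move=> odd_m; exists 1, m; rewrite mul1r. Qed.

Lemma Z2D x y : Z2 x -> Z2 y -> Z2 (x + y).
Proof.
move=> [a [b [odd_b ->]]] [c [d [odd_d ->]]].
exists (a * d%:Z + c * b%:Z), (b * d)%N; split; first by rewrite oddM odd_b.
have := odd_natr_neq0 odd_b; have := odd_natr_neq0 odd_d.
by rewrite intrD !intrM natrM => ? ?; field; apply/andP.
Qed.

Lemma Z2M x y : Z2 x -> Z2 y -> Z2 (x * y).
Proof.
move=> [a [b [odd_b ->]]] [c [d [odd_d ->]]].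
exists (a * c), (b * d)%N; split; first by rewrite oddM odd_b.
have := odd_natr_neq0 odd_b; have := odd_natr_neq0 odd_d.
by rewrite !intrM natrM => ? ?; field; apply/andP.
Qed.

Lemma Z2N x : Z2 x -> Z2 (- x).
Proof. by rewrite -mulN1r; apply: Z2M; apply: (Z2_int (-1)). Qed.

Lemma twoZ2D x y : twoZ2 x -> twoZ2 y -> twoZ2 (x + y).
Proof. by rewrite /twoZ2 mulrDl; apply: Z2D. Qed.

Lemma twoZ2N x : twoZ2 x -> twoZ2 (- x).
Proof. by rewrite /twoZ2 mulNr; apply: Z2N. Qed.

Lemma twoZ2B x y : twoZ2 x -> twoZ2 y -> twoZ2 (x - y).
Proof. by move=> ? ?; apply/twoZ2D/twoZ2N. Qed.

Lemma twoZ2M x y : Z2 x -> twoZ2 y -> twoZ2 (x * y).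
Proof. by rewrite /twoZ2 -mulrA; apply: Z2M. Qed.

Lemma twoZ2_even n : ~~ odd n -> twoZ2 n%:R.
Proof.
move=> even_n; rewrite /twoZ2 -[n]odd_double_half (negbTE even_n) add0n -muln2.
by rewrite natrM mulfK //; apply: Z2_nat.
Qed.

Lemma twoZ2_sum n (F : 'I_n -> rat) :
  (forall i, twoZ2 (F i)) -> twoZ2 (\sum_(i < n) F i).
Proof.
by move=> F2; apply: (big_ind twoZ2) => //; [exact: (@twoZ2_even 0) | exact: twoZ2D].
Qed.

Lemma sum_binomial_even m : (0 < m)%N ->
  \sum_(i < m.+1) ('C(m, i))%:R * (~~ odd i)%:R = 2 ^+ m.-1 :> rat.
Proof.
move=> m_gt0; apply: (@mulfI _ 2) => //.
have -> : 2 * 2 ^+ m.-1 = (1 + 1) ^+ m + (1 + -1) ^+ m :> rat.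
  by rewrite -exprS prednK // subrr expr0n eqn0Ngt m_gt0 addr0.
rewrite !exprDn -big_split mulr_sumr; apply: eq_bigr => i _ /=.
rewrite !expr1n !mul1r -signr_odd; case: (odd i) => /=.
  by rewrite mulr0 expr1 mulNrn addrN.
by rewrite mulr1 expr0 mulr2n mulrDl mul1r.
Qed.

(* The recurrence doubled, with 2 B_i split as [i even] + (2 B_i - [i even]). *)
Lemma bernoulli_even_rec n : ~~ odd n ->
  (n.+3)%:R * (2 * bernoulli n.+2 - 1) = (n.+2)%:R - 2 ^+ n.+2
    - \sum_(i < n) ('C(n.+3, i.+2))%:R * (2 * bernoulli i.+2 - (~~ odd i)%:R).
Proof.
move=> even_n; pose c i := 2 * bernoulli i - (~~ odd i)%:R.
have sum_c : \sum_(i < n.+3) ('C(n.+3, i))%:R * c i = - 2 ^+ n.+2.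
  have := @sum_binomial_even n.+3 isT.
  rewrite big_ord_recr /= negbK even_n mulr0 addr0 => <-.
  rewrite /c; under eq_bigr do rewrite mulrBr mulrCA.
  by rewrite sumrB -mulr_sumr sum_binomial_bernoulli // mulr0 sub0r.
move: sum_c; rewrite big_ord_recr /= binSn /c /= negbK even_n.
rewrite !big_ord_recl /= bin0 bin1 bernoulli0 bernoulli1.
under eq_bigr do rewrite /bump /= add0n negbK.
by rewrite -[n.+3%:R]natr1 => ?; lra.
Qed.

Lemma twoZ2_bernoulli n : (2 <= n)%N -> twoZ2 (2 * bernoulli n - (~~ odd n)%:R).
Proof.
elim/ltn_ind: n => n IHn le2n; case: (boolP (odd n)) => [odd_n | even_n].
  have n_neq2 : n != 2%N by apply: contraTneq odd_n => ->.
  by rewrite bernoulli_odd ?mulr0 ?subrr; [exact: (@twoZ2_even 0) | lia |].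
have [m def_n] : exists m, n = m.+2 by exists n.-2; lia.
move: even_n; rewrite def_n /= negbK => even_m.
have odd_m3 : odd m.+3 by rewrite /= even_m.
rewrite -[_ - 1](mulKf (odd_natr_neq0 odd_m3)) bernoulli_even_rec //.
apply: twoZ2M; first exact: Z2_invn.
apply: twoZ2B.
  by rewrite -natrX; apply: twoZ2B; apply: twoZ2_even; rewrite ?oddX /= ?even_m.
apply: twoZ2_sum => i; apply: twoZ2M; first exact: Z2_nat.
by have := IHn i.+2; rewrite def_n !ltnS /= negbK; apply.
Qed.

Definition odd_half (r : rat) :=
  exists (a : int) (b : nat), [/\ odd `|a|, odd b & r = a%:~R / (2 * b)%:R].

Lemma odd_absz (a : int) : odd `|a| = ~~ (2 %| a)%Z.
Proof. by rewrite dvdzE dvdn2 negbK. Qed.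

Lemma odd_half_bernoulli n : (2 <= n)%N -> ~~ odd n -> odd_half (bernoulli n).
Proof.
move=> le2n even_n; have [c [d [odd_d]]] := twoZ2_bernoulli le2n.
rewrite even_n => def_c; exists (d%:Z + 2 * c), d; split => //.
  by rewrite odd_absz rpredDr ?dvdz_mulr // -odd_absz.
have d_neq0 := odd_natr_neq0 odd_d.
have -> : bernoulli n = (2 * bernoulli n - 1) / 2 + 2^-1 by field.
by rewrite def_c intrD intrM -pmulrn natrM; field.
Qed.

Section OddHalf.

Variable r : rat.
Hypothesis half_r : odd_half r.

Lemma odd_half_scale p q : odd p -> odd q -> odd_half (p%:R * r / q%:R).
Proof.
move: half_r => [a [b [odd_a odd_b def_r]]] odd_p odd_q; rewrite def_r.
exists (p%:Z * a), (b * q)%N; split; rewrite ?abszM ?oddM ?odd_p ?odd_b //.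
have := odd_natr_neq0 odd_b; have := odd_natr_neq0 odd_q.
by rewrite intrM -pmulrn !natrM => ? ?; field; apply/andP.
Qed.

Lemma odd_half_neq0 : r != 0.
Proof.
move: half_r => [a [b [odd_a odd_b def_r]]].
have a_neq0 : a != 0 by apply: contraTneq odd_a => ->.
rewrite def_r mulf_neq0 ?intr_eq0 // invr_eq0 natrM mulf_neq0 //.
exact: odd_natr_neq0 odd_b.
Qed.

Lemma odd_half_logn (x y : int) : y != 0 -> r = x%:~R / y%:~R ->
  (logn 2 `|x|).+1 = logn 2 `|y|.
Proof.
move: half_r => [a [b [odd_a odd_b def_r]]] y_neq0 r_xy.
have x_neq0 : x != 0 by apply: contra_neq odd_half_neq0 => x0; rewrite r_xy x0 mul0r.
have cross : x * (2 * b)%N%:Z = a * y.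
  have y_neq0' : y%:~R != 0 :> rat by rewrite intr_eq0.
  have b_neq0 := odd_natr_neq0 odd_b.
  apply: (@intr_inj rat); rewrite !intrM -pmulrn natrM.
  by move: r_xy; rewrite def_r natrM => /eqP; rewrite eqr_div ?mulf_neq0 // => /eqP.
have a_neq0 : a != 0 by apply: contraTneq odd_a => ->.
have b_gt0 : (0 < b)%N by case: (b) odd_b.
have := congr1 (logn 2 \o absz) cross; rewrite /= !abszM /= !lognM ?absz_gt0 ?muln_gt0 //.
rewrite (@logn_coprime 2 `|a|) ?(@logn_coprime 2 b) ?coprime2n //.
by rewrite -[logn 2 2]/1%N addn0 add0n addn1.
Qed.

Lemma odd_half_v2 : v2 r = -1.
Proof.
have := odd_half_logn (denq_neq0 r) (esym (divq_num_den r)) => logn_den.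
have two_dvd_den : (2 %| `|denq r|)%N.
  by move: (ltn0Sn (logn 2 `|numq r|)); rewrite logn_den logn_gt0 mem_primes => /and3P[].
rewrite /v2 -logn_den logn_coprime //.
by rewrite (coprime_dvdl two_dvd_den) // coprime_sym coprime_num_den.
Qed.

Lemma odd_half_not_exp n (y : rat) : (2 <= n)%N -> y ^+ n != r.
Proof.
move=> le2n; apply/eqP => yr.
have r_pow : r = (numq y ^+ n)%:~R / (denq y ^+ n)%:~R.
  by rewrite -yr !rmorphXn -expr_div_n divq_num_den.
have := odd_half_logn (expf_neq0 n (denq_neq0 y)) r_pow.
rewrite !abszX !lognX => /(congr1 (modn^~ n)).
by rewrite mulnC -addn1 modnMDl modnMr modn_small.
Qed.

End OddHalf.

Lemma odd_sum_expn l m :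
  odd (\sum_(i < m) l ^ i) = if odd l then odd m else (0 < m)%N.
Proof.
elim: m => [|m IHm]; first by rewrite big_ord0; case: (odd l).
rewrite big_ord_recr /= oddD IHm oddX; case: (odd l) => /=; first by rewrite orbT addbT.
by case: m {IHm}.
Qed.

Lemma natr_expn_sub1 (R : pzRingType) (l m : nat) : (0 < l)%N ->
  (l%:R : R) ^+ m - 1 = (l%:R - 1) * (\sum_(i < m) l ^ i)%:R.
Proof.
move=> l_gt0; have natr_pred j : (0 < j)%N -> (j.-1%:R : R) = j%:R - 1.
  by move=> j_gt0; rewrite -subn1 natrB.
by rewrite -natrX -(natr_pred (l ^ m)%N) ?expn_gt0 ?l_gt0 // predn_exp natrM natr_pred.
Qed.

Lemma horner_deriv_comp (R : comNzRingType) (p q : {poly R}) x :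
  ((p \Po q)^`()).[x] = (p^`()).[q.[x]] * (q^`()).[x].
Proof. by rewrite deriv_comp hornerM horner_comp. Qed.

Lemma horner0_deriv_mulX (R : comNzRingType) (p : {poly R}) : (('X * p)^`()).[0] = p.[0].
Proof. by rewrite derivM derivX !hornerE. Qed.

Theorem mainTheorem5 (k l : nat) :
  (2 <= k)%N -> ~~ odd k -> (2 <= l)%N ->
  (let r := ((k.+1)%:R * (l%:R - 1) * bernoulli k) / ((l%:R : rat) ^+ k.+1 - 1) in
   r != 0 /\ v2 r = (-1)%R)
  /\
  (forall n : nat, (2 <= n)%N -> (n %| k)%N ->
     ~ exists f : {poly rat},
         (bernoulli_poly k.+1 \Po ((l%:R : rat) *: 'X + 1))
         - (bernoulli_poly k.+1 \Po ('X + 1))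
         = 'X * (((l%:R : rat) ^+ k.+1 - 1) *: f ^+ n)).
Proof.
move=> le2k even_k le2l; set s := (\sum_(i < k.+1) l ^ i)%N.
have odd_s : odd s by rewrite odd_sum_expn /= even_k; case: (odd l).
have lk1 : (l%:R : rat) ^+ k.+1 - 1 = (l%:R - 1) * s%:R by apply: natr_expn_sub1; lia.
have l1_neq0 : l%:R - 1 != 0 :> rat by rewrite subr_eq0 pnatr_eq1; lia.
set r := (_ / _); have half_r : odd_half r.
  have -> : r = (k.+1)%:R * bernoulli k / s%:R.
    by rewrite /r lk1; field; rewrite l1_neq0 odd_natr_neq0.
  by apply: (odd_half_scale (odd_half_bernoulli le2k even_k)); rewrite /= ?even_k.
split; first by split; [exact: odd_half_neq0 | exact: odd_half_v2].
move=> n le2n _ [f /(congr1 (fun p => (p^`()).[0]))].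
rewrite horner0_deriv_mulX derivB hornerD hornerN !horner_deriv_comp.
rewrite deriv_bernoulli_poly !derivE !hornerE horner1_bernoulli_poly // => f0.
apply: (negP (odd_half_not_exp half_r f.[0] le2n)); apply/eqP.
have lk1_neq0 : (l%:R : rat) ^+ k.+1 - 1 != 0 by rewrite lk1 mulf_neq0 ?odd_natr_neq0.
by apply: (mulfI lk1_neq0); rewrite -f0 /r; field.
Qed.
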